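(* Let $F$ be an augmentation of a tree $T$. Then $\mathrm{ex}(n,F^3)\le 3(|T|+1)n^2$ for all sufficiently large $n$.
   Context: $|T|$ is the number of edges of $T$. A graph $F$ is an augmentation of a tree $T$ if $F$ is obtained from $T$ by adding one new edge (whose endpoints need not lie in $V(T)$). The expansion $F^3$ is the $3$-graph obtained from $F$ by adding to each edge a new vertex, distinct edges receiving distinct new vertices. $\mathrm{ex}(n,F^3)$ is the maximum number of edges in an $n$-vertex $3$-graph containing no copy of $F^3$. *)

From mathcomp Require Import all_boot.
Set Implicit Arguments. Unset Strict Implicit. Unset Printing Implicit Defensive.

Definition tadj (V : finType) (ET : {set {set V}}) : rel V :=
  fun x y => [set x; y] \in ET.

Definition is_tree (V : finType) (VT : {set V}) (ET : {set {set V}}) : Prop :=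
  [/\ VT != set0,
      (forall A, A \in ET -> #|A| = 2 /\ A \subset VT),
      (forall x y, x \in VT -> y \in VT -> connect (tadj ET) x y) &
      (forall s : seq V, uniq s -> 3 <= size s -> ~~ cycle (tadj ET) s)].

(* F = (V, E) (vertex set = all of V) is an augmentation of the tree
   T = (VT, ET): E = ET plus one new edge e, V(F) = VT u e. *)
Definition is_augmentation (V : finType) (E : {set {set V}})
    (VT : {set V}) (ET : {set {set V}}) : Prop :=
  is_tree VT ET /\
  exists e : {set V},
    [/\ #|e| = 2, e \notin ET, E = e |: ET & [set: V] = VT :|: e].

(* Vertex type of the expansion F^3: old vertices plus one new vertex per edge. *)
Definition exp_vert (V : finType) (E : {set {set V}}) : finType :=
  (V + {A : {set V} | A \in E})%type.

Definition expansion (V : finType) (E : {set {set V}}) : {set {set exp_vert E}} :=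
  [set (inl @: val a) :|: [set inr a] | a : {A : {set V} | A \in E}].

Definition uniform3 (n : nat) (H : {set {set 'I_n}}) : bool :=
  [forall A in H, #|A| == 3].

Definition hcontains (U : finType) (G : {set {set U}}) (n : nat)
    (H : {set {set 'I_n}}) : bool :=
  [exists f : {ffun U -> 'I_n}, injectiveb f && [forall A in G, (f @: A) \in H]].

Definition ex3 (U : finType) (G : {set {set U}}) (n : nat) : nat :=
  \max_(H : {set {set 'I_n}} | uniform3 H && ~~ hcontains G H) #|H|.

(* Delete, one at a time, all edges through a pair of positive codegree
   less than d := |V(F)| + |T| <= 3(|T| + 1).  Fewer than d n^2 edges are
   lost, so a nonempty subgraph survives in which every pair of positive
   codegree has codegree at least d.  In the link graph of any vertex x of it
   every vertex has degree at least d, so the forest T - a, where a is an end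
   of the new edge, embeds greedily leaf by leaf; sending a to x maps each
   edge of F onto a pair of codegree at least d, which leaves enough room to
   pick the expansion vertices distinct and outside the image of V(F). *)

From mathcomp Require Import all_boot.
From mathcomp Require Import zify.
Set Implicit Arguments. Unset Strict Implicit. Unset Printing Implicit Defensive.

Lemma exists_notin_of_card_lt (T : finType) (B C : {set T}) :
  #|B| < #|C| -> exists2 y, y \in C & y \notin B.
Proof.
move=> ltBC; apply/subsetPn.
by apply: contraTN ltBC => /subset_leq_card; rewrite -leqNgt.
Qed.

Lemma injective_in_update (T U : finType) (g : T -> U) (S : {set T}) v y :
  {in S &, injective g} -> y \notin g @: S ->
  {in v |: S &, injective (fun z => if z == v then y else g z)}.
Proof.
move=> gi yg z1 z2; rewrite !inE.
case: (eqVneq z1 v) => [->|z1v]; case: (eqVneq z2 v) => [->|z2v] //= S1 S2.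
- by move=> yE; case/negP: yg; rewrite yE imset_f.
- by move=> yE; case/negP: yg; rewrite -yE imset_f.
- exact: gi.
Qed.

Lemma exists_injective_choice (I U : finType) (W : I -> {set U}) :
  (forall i, #|I| <= #|W i|) -> exists2 g : I -> U, injective g & forall i, g i \in W i.
Proof.
move=> largeW.
have W0 i : exists u, u \in W i.
  by apply/card_gt0P; apply: leq_trans (largeW i); apply/card_gt0P; exists i.
suff [g gi gW] : exists2 g : I -> U, {in [set: I] &, injective g} & forall i, g i \in W i.
  by exists g => // i j; apply: gi; rewrite inE.
have [m] := ubnP #|[set: I]|; elim: m [set: I] => // m IH S ltSm.
case: (set_0Vmem S) => [-> | [i Si]].
  by exists (fun i => xchoose (W0 i)) => [? ?|j]; rewrite ?inE //; apply: xchooseP.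
have ltSi : #|S :\ i| < #|S| by rewrite (cardsD1 i S) Si.
have [g gi gW] := IH (S :\ i) (leq_trans ltSi ltSm).
have [y yW yg] : exists2 y, y \in W i & y \notin g @: (S :\ i).
  apply: exists_notin_of_card_lt; apply: leq_ltn_trans (leq_imset_card _ _) _.
  by apply: leq_trans ltSi (leq_trans (max_card _) (largeW i)).
exists (fun j => if j == i then y else g j).
  by rewrite -(setD1K Si); apply: injective_in_update.
by move=> j; case: eqP => [->|].
Qed.

Lemma card_setD_ge (T : finType) (B C D : {set T}) :
  D \subset C -> [disjoint B & D] -> #|B| + #|D| <= #|B :\: C| + #|C|.
Proof.
move=> sDC disBD; rewrite -(cardsID C B).
have : #|B :&: C| <= #|C :\: D|.
  apply/subset_leq_card/subsetP => z; rewrite !inE => /andP[zB ->].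
  by rewrite andbT; apply: contraL zB => zD; rewrite (disjointFl disBD).
by rewrite cardsDS //; have := subset_leq_card sDC; lia.
Qed.

Section Codegree.
Variable T : finType.
Implicit Types (H : {set {set T}}) (P : {set T}).

Definition codeg H P := #|[set B in H | P \subset B]|.

Definition codeg_support H := [set P : {set T} | (#|P| == 2) && (0 < codeg H P)].

Definition codeg_closed d H := forall P, #|P| = 2 -> 0 < codeg H P -> d <= codeg H P.

Definition thirds H P := [set w | (w \notin P) && (w |: P \in H)].

Lemma codeg_gt0 H P B : B \in H -> P \subset B -> 0 < codeg H P.
Proof. by move=> BH PB; apply/card_gt0P; exists B; rewrite inE BH. Qed.

Lemma codegS H1 H2 P : H1 \subset H2 -> codeg H1 P <= codeg H2 P.
Proof.
move=> sH; apply/subset_leq_card/subsetP => B.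
by rewrite !inE => /andP[/(subsetP sH) -> ->].
Qed.

Lemma exists_codeg_closed_subgraph d H :
  d * #|codeg_support H| < #|H| ->
  exists H', [/\ H' \subset H, H' != set0 & codeg_closed d H'].
Proof.
have [m] := ubnP #|codeg_support H|; elim: m H => // m IH H ltHm large.
have [P /and3P[P2 cP0 cPd] | closed] :=
  pickP [pred P : {set T} | [&& #|P| == 2, 0 < codeg H P & codeg H P < d]]; last first.
  exists H; split=> //; first by rewrite -card_gt0; apply: leq_ltn_trans large.
  move=> P /eqP P2 cP0; rewrite leqNgt.
  by apply/negP => cPd; have := closed P; rewrite /= P2 cP0 cPd.
pose S := [set B in H | P \subset B].
have suppS : codeg_support (H :\: S) \proper codeg_support H.
  apply/properP; split.
    apply/subsetP => Q; rewrite !inE => /andP[-> cQ]; apply: leq_trans cQ _.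
    exact/codegS/subsetDl.
  exists P; first by rewrite inE P2 cP0.
  rewrite inE negb_and orbC -leqNgt leqn0 cards_eq0; apply/orP; left.
  by apply/eqP/setP => B; rewrite !inE; case: (B \in H); case: (P \subset B).
have cardHS : #|H| = codeg H P + #|H :\: S|.
  rewrite -(cardsID S H) (setIidPr _) //.
  by apply/subsetP => B; rewrite inE => /andP[].
have large' : d * #|codeg_support (H :\: S)| < #|H :\: S|.
  have := proper_card suppS; move: large; rewrite cardHS.
  move: #|codeg_support H| #|codeg_support _| => s s'; nia.
have [H' [sH'HS H'n0 cl]] := IH (H :\: S) (leq_trans (proper_card suppS) ltHm) large'.
by exists H'; split=> //; apply: subset_trans sH'HS (subsetDl _ _).
Qed.

Lemma codeg_le_thirds H P :
  {in H, forall B : {set T}, #|B| = 3} -> #|P| = 2 -> codeg H P <= #|thirds H P|.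
Proof.
move=> H3 P2; apply: leq_trans (leq_imset_card (fun w => w |: P) _).
apply/subset_leq_card/subsetP => B; rewrite inE => /andP[BH PB].
have /cards1P[w Bw] : #|B :\: P| == 1.
  by rewrite cardsD (setIidPr PB) H3 // P2.
have BE : B = w |: P by rewrite -Bw setUC -{1}(setIidPr PB) setID.
have /setDP[_ wP] : w \in B :\: P by rewrite Bw set11.
by apply/imsetP; exists w; rewrite // inE wP -BE.
Qed.

Lemma codeg_support_card H : #|codeg_support H| <= 'C(#|T|, 2).
Proof.
rewrite -card_draws; apply/subset_leq_card/subsetP => P.
by rewrite !inE => /andP[].
Qed.
End Codegree.

Section Forest.
Variables (V : finType) (r : rel V).
Hypotheses (r_sym : symmetric r) (r_irr : irreflexive r).
Hypothesis r_acyclic : forall s : seq V, uniq s -> 3 <= size s -> ~~ cycle r s.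

Lemma acyclic_path_nbr x s z :
  uniq (x :: s) -> path r x s -> z \in s -> r z x -> z = head x s.
Proof.
case: s => [//|y s] uniq_xs xs_path; rewrite inE => /predU1P[//|zs] rzx.
exfalso; move: uniq_xs xs_path; case/splitPr: zs => s1 s2 uniq_xs xs_path.
have uniq_c : uniq (x :: y :: rcons s1 z).
  apply: subseq_uniq uniq_xs; rewrite -cats1 -!cat_cons.
  by rewrite -[_ ++ z :: s2]/(_ ++ [:: z] ++ s2) catA prefix_subseq.
have := r_acyclic uniq_c; rewrite /= size_rcons => /(_ isT) /negP; apply.
move: xs_path; rewrite /= cat_path /= => /andP[rxy /andP[s1_path /andP[rz _]]].
by rewrite rcons_path /= last_rcons rcons_path rxy s1_path rz rzx.
Qed.

Lemma forest_leaf (D : {set V}) :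
  D != set0 -> exists2 v, v \in D & #|[set w in D | r v w]| <= 1.
Proof.
move=> Dn0; apply/exists_inP; apply: contraT => /exists_inPn deg2.
have nbr v y : v \in D -> exists2 z, z \in D & r v z && (z != y).
  move=> vD; have : 0 < #|[set w in D | r v w] :\ y|.
    by have := deg2 v vD; rewrite (cardsD1 y); lia.
  by case/card_gt0P=> z; rewrite !inE => /and3P[zy zD rvz]; exists z; rewrite ?rvz.
have long i : exists x s, [/\ uniq (x :: s), path r x s, {subset x :: s <= D} & i < size s].
  elim: i => [|i [x [s [uniq_xs xs_path xsD lt_is]]]].
    case/set0Pn: Dn0 => x xD; have [z zD /andP[rxz _]] := nbr x x xD.
    exists x, [:: z]; split=> //=; last by move=> w; rewrite !inE => /orP[] /eqP->.
      by rewrite inE andbT; apply: contraTneq rxz => ->; rewrite r_irr.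
    by rewrite rxz.
  case: s uniq_xs xs_path xsD lt_is => [//|y s] uniq_xs xs_path xsD lt_is.
  have [z zD /andP[rxz zy]] := nbr x y (xsD x (mem_head _ _)).
  have zxs : z \notin x :: y :: s.
    rewrite inE negb_or; apply/andP; split; first by apply: contraTneq rxz => ->; rewrite r_irr.
    apply/negP => zs; case/eqP: zy.
    by apply: acyclic_path_nbr uniq_xs xs_path zs _; rewrite r_sym.
  exists z, (x :: y :: s); split=> //=; first by rewrite zxs.
    by rewrite r_sym rxz.
  by move=> w; rewrite inE => /predU1P[->|/xsD].
have [x [s [uniq_xs _ xsD lt_s]]] := long #|D|.
have /(uniq_leq_size uniq_xs) : {subset x :: s <= enum D} by move=> w /xsD; rewrite mem_enum.
by rewrite -cardE /= => /(ltn_trans lt_s); rewrite ltnn.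
Qed.

Lemma forest_embedding (U : finType) (h : rel U) (A : {set U}) k :
  symmetric h -> k < #|A| -> {in A, forall u, k <= #|[set w in A | h u w]|} ->
  forall D : {set V}, #|D| <= k -> exists f : V -> U,
    [/\ {in D &, injective f}, {in D, forall v, f v \in A} &
        {in D &, forall u w, r u w -> h (f u) (f w)}].
Proof.
move=> h_sym ltkA degA D; have [m] := ubnP #|D|; elim: m D => // m IH D ltDm leDk.
have [u0 u0A] : exists u0, u0 \in A by apply/card_gt0P; apply: leq_ltn_trans ltkA.
case: (set_0Vmem D) => [-> | [v0 v0D]].
  by exists (fun=> u0); split=> [? ?|?|? ?]; rewrite inE.
have Dn0 : D != set0 by apply/set0Pn; exists v0.
have [v vD leaf_v] := forest_leaf Dn0.
have ltDv : #|D :\ v| < #|D| by rewrite (cardsD1 v D) vD.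
have [f0 [f0_inj f0_A f0_hom]] := IH (D :\ v) (leq_trans ltDv ltDm) (leq_trans (ltnW ltDv) leDk).
(* The leaf v has at most one neighbour in D, so its image only has to be
   adjacent to a single, already placed vertex. *)
have [C [CA leCk hC]] : exists C : {set U}, [/\ C \subset A, k <= #|C| &
    forall u y, u \in D -> r v u -> y \in C -> h (f0 u) y].
  case: (boolP [exists u in D, r v u]) => [/exists_inP[u uD rvu] | /exists_inPn no_nbr].
    have uDv : u \in D :\ v by rewrite !inE uD andbT; apply: contraTneq rvu => ->; rewrite r_irr.
    exists [set w in A | h (f0 u) w]; split; first by apply/subsetP => w; rewrite inE => /andP[].
      exact: degA (f0_A u uDv).
    move=> u' y u'D rvu'; rewrite inE => /andP[_].
    by rewrite (card_le1_eqP leaf_v u' u) // !inE ?u'D ?uD.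
  by exists A; split=> // [|u y uD]; [exact: ltnW | rewrite (negbTE (no_nbr u uD))].
have [y yC y_new] : exists2 y, y \in C & y \notin f0 @: (D :\ v).
  apply: exists_notin_of_card_lt; apply: leq_ltn_trans (leq_imset_card _ _) _.
  exact: leq_trans ltDv (leq_trans leDk leCk).
exists (fun z => if z == v then y else f0 z); split.
- by rewrite -(setD1K vD); apply: injective_in_update.
- move=> z zD /=; case: eqP => [_|/eqP zv]; first exact: subsetP CA y yC.
  by apply: f0_A; rewrite !inE zv.
- move=> z1 z2 z1D z2D rz /=.
  case: (eqVneq z1 v) => [z1v|z1v]; case: (eqVneq z2 v) => [z2v|z2v].
  + by move: rz; rewrite z1v z2v r_irr.
  + by rewrite h_sym; apply: hC; rewrite // -z1v.
  + by apply: hC; rewrite // -z2v r_sym.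
  + by apply: f0_hom; rewrite // !inE ?z1v ?z2v.
Qed.
End Forest.

Section Trees.
Variables (V : finType) (VT : {set V}) (ET : {set {set V}}).

Lemma tadj_sym : symmetric (tadj ET).
Proof. by move=> u w; rewrite /tadj setUC. Qed.

Lemma tadj_irr : {in ET, forall A : {set V}, #|A| = 2} -> irreflexive (tadj ET).
Proof. by move=> ET2 u; apply/negP => /ET2; rewrite setUid cards1. Qed.

Lemma tree_card : is_tree VT ET -> #|VT| <= 2 * #|ET| + 1.
Proof.
case=> _ ET2 conn _; case: (leqP #|VT| 1) => [|lt1VT]; first lia.
have /subset_leq_card : VT \subset cover ET.
  apply/subsetP => u uVT; have /card_gt0P[w] : 0 < #|VT :\ u|.
    by move: lt1VT; rewrite (cardsD1 u) uVT.
  rewrite !inE => /andP[wu wVT]; case/connectP: (conn u w uVT wVT) => -[|z p] /=.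
    by move=> _ wE; rewrite wE eqxx in wu.
  by case/andP=> uz _ _; apply/bigcupP; exists [set u; z]; rewrite // !inE eqxx.
move/leq_trans/(_ (leq_of_leqif (leq_card_cover ET))).
by rewrite (eq_bigr (fun=> 2)) ?sum_nat_const => [|A /ET2[]]; lia.
Qed.
End Trees.

Lemma augmentation_card (V : finType) (E : {set {set V}}) VT ET :
  is_augmentation E VT ET ->
  [/\ {in E, forall A : {set V}, #|A| = 2}, #|E| = #|ET| + 1 & #|V| <= 2 * #|ET| + 3].
Proof.
case=> tree [e [e2 eET -> VE]]; rewrite cardsU1 eET addnC; split=> //.
  by move=> A /setU1P[-> //|]; case: tree => _ ET2 _ _ /ET2[].
rewrite -cardsT VE; apply: leq_trans (leq_of_leqif (leq_card_setU _ _)) _.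
by rewrite e2; have := tree_card tree; lia.
Qed.

Section Link.
Variables (T : finType) (H : {set {set T}}) (x : T).
Hypothesis H3 : {in H, forall B : {set T}, #|B| = 3}.

Definition link_vertices := [set u | (u != x) && (0 < codeg H [set x; u])].

Definition link : rel T := fun u w => (u != x) && (w \in thirds H [set x; u]).

Lemma link_sym : symmetric link.
Proof.
move=> u w; rewrite /link !inE !negb_or (eq_sym u w).
have -> : u |: [set x; w] = w |: [set x; u] by rewrite setUCA [RHS]setUCA [[set u; w]]setUC.
by case: (u != x); case: (w != x).
Qed.

Lemma link_degree d : codeg_closed d H ->
  {in link_vertices, forall u, d <= #|[set w in link_vertices | link u w]|}.
Proof.
move=> closed u; rewrite inE => /andP[ux cu].
have xu2 : #|[set x; u]| = 2 by rewrite cards2 eq_sym ux.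
apply: leq_trans (closed _ xu2 cu) _; apply: leq_trans (codeg_le_thirds H3 xu2) _.
apply/subset_leq_card/subsetP => w wT; rewrite inE /link ux wT andbT.
move: wT; rewrite inE !inE negb_or => /andP[/andP[wx wu] wxuH].
rewrite wx andbT; apply: (codeg_gt0 wxuH); apply/subsetP => z; rewrite !inE.
by case/orP => /eqP->; rewrite eqxx ?orbT.
Qed.

Lemma link_vertices_card d B : codeg_closed d H -> B \in H -> x \in B ->
  d < #|link_vertices|.
Proof.
move=> closed BH xB.
have [y yB yx] : exists2 y, y \in B & y != x.
  have /card_gt0P[y] : 0 < #|B :\ x| by move: (H3 BH); rewrite (cardsD1 x B) xB add1n => -[->].
  by rewrite !inE => /andP[yx yB]; exists y.
have yL : y \in link_vertices.
  rewrite inE yx; apply: (codeg_gt0 BH); apply/subsetP => z; rewrite !inE.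
  by case/orP => /eqP->.
have := link_degree closed yL; rewrite (cardsD1 y link_vertices) yL.
move=> /leq_trans; apply; apply/subset_leq_card/subsetP => w.
rewrite !inE => /andP[wL /andP[_]]; rewrite wL andbT !inE !negb_or.
by case/andP=> /andP[_]; rewrite eq_sym.
Qed.
End Link.

Lemma augmentation_embedding (V : finType) (E : {set {set V}}) VT ET
    (T : finType) (H : {set {set T}}) d :
  is_augmentation E VT ET -> {in H, forall B : {set T}, #|B| = 3} ->
  codeg_closed d H -> H != set0 -> #|V| <= d ->
  exists2 f : V -> T, injective f & {in E, forall A : {set V}, 0 < codeg H (f @: A)}.
Proof.
case=> -[_ ET2 _ acyclic] [e [e2 _ -> _]] H3 closed /set0Pn[B BH] leVd.
have [x xB] : exists x, x \in B by apply/card_gt0P; rewrite H3.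
have /cards2P[a [b [ab ->]]] : #|e| == 2 by rewrite e2.
have ET2' : {in ET, forall A : {set V}, #|A| = 2} by move=> A /ET2[].
have leDd : #|[set: V] :\ a| <= d.
  by apply: leq_trans (subset_leq_card (subsetDl _ _)) _; rewrite cardsT.
have [f0 [f0_inj f0_link f0_hom]] := forest_embedding (tadj_sym ET) (tadj_irr ET2')
  acyclic (link_sym H x) (link_vertices_card H3 closed BH xB) (link_degree H3 closed) leDd.
have f0_ok w : w != a -> (f0 w != x) && (0 < codeg H [set x; f0 w]).
  by move=> wa; have := f0_link w; rewrite !inE wa; apply.
pose f v := if v == a then x else f0 v.
have f_inj : injective f.
  have x_new : x \notin f0 @: ([set: V] :\ a).
    by apply/imsetP => -[w]; rewrite !inE andbT => /f0_ok/andP[/eqP/nesym].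
  move: (injective_in_update (v := a) f0_inj x_new); rewrite setD1K ?inE // => f_inj u w.
  by apply: f_inj; rewrite inE.
have f_pair u w : f @: [set u; w] = [set f u; f w] by rewrite imsetU1 imset_set1.
have pendant w : w != a -> 0 < codeg H (f @: [set a; w]).
  by move=> wa; rewrite f_pair /f eqxx (negbTE wa); case/andP: (f0_ok w wa).
exists f => // A; rewrite !inE => /predU1P[-> | AET]; first by apply: pendant; rewrite eq_sym.
have /cards2P[u [w [uw AE]]] : #|A| == 2 by rewrite ET2'.
rewrite AE; case: (eqVneq u a) => [ua | ua].
  by rewrite ua; apply: pendant; rewrite eq_sym -ua.
case: (eqVneq w a) => [-> | wa]; first by rewrite setUC; apply: pendant.
have ruw : tadj ET u w by rewrite /tadj -AE.
have := f0_hom u w; rewrite !inE ua wa => /(_ isT isT ruw) /andP[_].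
rewrite inE => /andP[_ triple_H]; rewrite f_pair /f (negbTE ua) (negbTE wa).
apply: (codeg_gt0 triple_H); apply/subsetP => z; rewrite !inE.
by case/orP => /eqP->; rewrite eqxx ?orbT.
Qed.

Lemma hcontainsS (U : finType) (G : {set {set U}}) n (H1 H2 : {set {set 'I_n}}) :
  H1 \subset H2 -> hcontains G H1 -> hcontains G H2.
Proof.
move=> sH /existsP[f /andP[f_inj GH1]]; apply/existsP; exists f; rewrite f_inj /=.
by apply/forall_inP => A /(forall_inP GH1)/(subsetP sH).
Qed.

Lemma expansion_embedding (V : finType) (E : {set {set V}}) n
    (H : {set {set 'I_n}}) (f : V -> 'I_n) :
  injective f ->
  {in E, forall A : {set V}, #|E| + #|V| <= #|thirds H (f @: A)| + #|A|} ->
  hcontains (expansion E) H.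
Proof.
move=> f_inj large.
pose W (a : {A | A \in E}) := thirds H (f @: val a) :\: f @: [set: V].
have [g g_inj gW] : exists2 g, injective g & forall a, g a \in W a.
  apply: exists_injective_choice => -[A AE]; rewrite card_sig /W /=.
  have -> : #|[pred A in E]| = #|E| by apply: eq_card.
  rewrite -(leq_add2r #|V|); apply: leq_trans (large A AE) _.
  rewrite -(card_imset A f_inj) -cardsT -(card_imset [set: V] f_inj).
  apply: card_setD_ge; first exact/imsetS/subsetT.
  by rewrite disjoints_subset; apply/subsetP => z; rewrite !inE => /andP[].
apply/existsP; exists [ffun z => match z with inl v => f v | inr a => g a end].
have g_new a v : g a != f v.
  by apply: contraTneq (gW a) => ->; rewrite !inE imset_f ?andbF.
apply/andP; split.
- apply/injectiveP => -[v1|a1] [v2|a2]; rewrite !ffunE.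
  + by move/f_inj ->.
  + by move=> fg; case/eqP: (g_new a2 v1).
  + by move/eqP; rewrite (negbTE (g_new a1 v2)).
  + by move/g_inj ->.
- apply/forall_inP => _ /imsetP[a _ ->]; rewrite imsetU imset_set1 ffunE -imset_comp.
  rewrite (eq_imset _ (fun v => ffunE _ (inl v))) setUC.
  by have := gW a; rewrite !inE => /andP[_ /andP[_]].
Qed.

Theorem proposition4p1 (V : finType) (E : {set {set V}})
    (VT : {set V}) (ET : {set {set V}}) :
  is_augmentation E VT ET ->
  exists N : nat, forall n : nat, N <= n ->
    ex3 (expansion E) n <= 3 * (#|ET| + 1) * n ^ 2.
Proof.
move=> aug; exists 0 => n _; apply/bigmax_leqP => H /andP[H3 noF].
rewrite leqNgt; apply/negP => large; case/negP: noF.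
have [E2 cardE cardV] := augmentation_card aug.
pose d := #|V| + #|ET|.
have C2 : 'C(n, 2) <= n ^ 2.
  by have := bin_ffact n 2; rewrite ffactnS ffactn1 (_ : 2`! = 2) //; nia.
have [H' [sH'H H'n0 closed]] : exists H' : {set {set 'I_n}},
    [/\ H' \subset H, H' != set0 & codeg_closed d H'].
  apply: exists_codeg_closed_subgraph; apply: leq_ltn_trans large.
  have := codeg_support_card H; rewrite card_ord => /leq_trans/(_ C2).
  move: #|codeg_support H| => s; rewrite /d; nia.
have H'3 : {in H', forall B : {set 'I_n}, #|B| = 3}.
  by move=> B /(subsetP sH'H) /(forall_inP H3) /eqP.
have [f f_inj f_pos] := augmentation_embedding aug H'3 closed H'n0 (leq_addr _ _).
apply: hcontainsS sH'H (expansion_embedding f_inj _) => A AE.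
have fA2 : #|f @: A| = 2 by rewrite card_imset // E2.
have := leq_trans (closed _ fA2 (f_pos A AE)) (codeg_le_thirds H'3 fA2).
rewrite E2 // cardE addnAC [#|ET| + _]addnC => le_d_thirds.
exact: leq_add le_d_thirds _.
Qed.
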